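(* There exist uncountably many Liouville numbers $\xi$ such that \[ w_{=2}(\xi) = w_{=2}^{*}(\xi) = +\infty. \]
   Context: For a polynomial $P \in \mathbb{Z}[X]$, $H(P)$ denotes the maximum of the absolute values of its coefficients. For a real algebraic number $\alpha$, $H(\alpha) = H(P)$, where $P$ is the minimal polynomial of $\alpha$ over $\mathbb{Z}$. Let $\xi$ be a real number. $w_1(\xi)$ is the supremum of the real numbers $w$ such that, for arbitrarily large $H$, there is a polynomial $P \in \mathbb{Z}[X]$ of degree at most $1$ with $H(P) \leq H$ and $0 < |P(\xi)| \leq H^{-w}$. A real number $\xi$ is a Liouville number if $w_1(\xi) = +\infty$. $w_{=2}(\xi)$ is the supremum of the real numbers $w$ such that, for arbitrarily large $H$, there is an irreducible polynomial $P \in \mathbb{Z}[X]$ of degree exactly $2$ with $H(P) \leq H$ and $0 < |P(\xi)| \leq H^{-w}$. $w_{=2}^{*}(\xi)$ is the supremum of the real numbers $w^{*}$ such that, for arbitrarily large $H$, there is a real algebraic number $\alpha$ of degree exactly $2$ with $H(\alpha) \leq H$ and $0 < |\xi - \alpha| \leq H(\alpha)^{-1} H^{-w^{*}}$. *)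

From HB Require Import structures.
From mathcomp Require Import all_boot all_order all_algebra.
From mathcomp Require Import all_classical all_reals all_analysis.
Set Implicit Arguments. Unset Strict Implicit. Unset Printing Implicit Defensive.
Import Order.TTheory GRing.Theory Num.Theory.
Local Open Scope ring_scope.
Local Open Scope classical_set_scope.

Definition heightZ (P : {poly int}) : nat := (\max_(i < size P) absz (P`_i)%R)%N.

Definition evalZ {R : realType} (P : {poly int}) (x : R) : R :=
  (map_poly (fun z : int => z%:~R) P).[x].

Definition irreducibleZ (P : {poly int}) : Prop :=
  P != 0 /\ P \isn't a GRing.unit /\
  forall Q S : {poly int}, P = Q * S -> Q \is a GRing.unit \/ S \is a GRing.unit.

(* P is the minimal polynomial of a over Z: nonzero, a is a root, primitive
   with positive leading coefficient (zcontents P = 1), and of minimal degree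
   among nonzero integer polynomials vanishing at a *)
Definition minpolyZ {R : realType} (a : R) (P : {poly int}) : Prop :=
  P != 0 /\ evalZ P a = 0 /\ zcontents P = 1 /\
  forall Q : {poly int}, Q != 0 -> evalZ Q a = 0 -> (size P <= size Q)%N.

Definition alg_deg2_height {R : realType} (a : R) (h : nat) : Prop :=
  exists P : {poly int}, minpolyZ a P /\ size P = 3%N /\ heightZ P = h.

Definition wset {R : realType} (C : {poly int} -> Prop) (xi : R) : set R :=
  [set w | forall H0 : R, exists H : R, H0 <= H /\
     exists P : {poly int}, C P /\ (heightZ P)%:R <= H /\
       0 < `|evalZ P xi| /\ `|evalZ P xi| <= H `^ (- w)].

Definition w1 {R : realType} (xi : R) : \bar R :=
  ereal_sup [set w%:E | w in wset (fun P => (size P <= 2)%N) xi].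

Definition liouville {R : realType} (xi : R) : Prop := w1 xi = +oo%E.

Definition w_eq2 {R : realType} (xi : R) : \bar R :=
  ereal_sup [set w%:E | w in wset (fun P => irreducibleZ P /\ size P = 3%N) xi].

Definition wstar_set {R : realType} (xi : R) : set R :=
  [set ws | forall H0 : R, exists H : R, H0 <= H /\
     exists (a : R) (h : nat), alg_deg2_height a h /\ h%:R <= H /\
       0 < `|xi - a| /\ `|xi - a| <= (h%:R)^-1 * H `^ (- ws)].

Definition w_eq2_star {R : realType} (xi : R) : \bar R :=
  ereal_sup [set w%:E | w in wstar_set xi].

(* For every bit sequence sg we build xi = sup_n A_n / D_n, where A_{n+1} / D_{n+1}
   is the least fraction of denominator D_{n+1} above the quadratic irrational
   alpha_n = A_n / D_n + c_n sqrt 2 / Q_n, with c_n = 1 or 2 according to sg n and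
   Q_n = 8 D_n^{n+1}.  The primitive part of (Q_n X - m_n)^2 - 2 c_n^2, where
   m_n = Q_n A_n / D_n, is the minimal polynomial of alpha_n, of height at most
   H_n = 9 Q_n^2.  Choosing D_{n+1} = 9 H_n^{n+1} Q_n makes
   0 < xi - A_n / D_n <= 8 / Q_n = D_n^{-n-1} and 0 < xi - alpha_n <= 1 / (H_n^{n+1} Q_n),
   so all three exponents are infinite.  If two sequences first differ at n, their
   alpha_n differ by sqrt 2 / Q_n, far more than both errors; hence sg |-> xi is
   injective and the set is uncountable. *)

From HB Require Import structures.
From mathcomp Require Import all_boot all_order all_algebra.
From mathcomp Require Import all_classical all_reals all_analysis.
From mathcomp Require Import zify ring lra.
Set Implicit Arguments. Unset Strict Implicit. Unset Printing Implicit Defensive.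
Import Order.TTheory GRing.Theory Num.Theory.
Local Open Scope ring_scope.

Lemma coef_le_heightZ (P : {poly int}) i : (absz (P`_i)%R <= heightZ P)%N.
Proof.
have [lt_i | le_i] := ltnP i (size P); last by rewrite nth_default.
exact: (@leq_bigmax_cond _ _ (fun j : 'I_(size P) => absz P`_j) (Ordinal lt_i)).
Qed.

Lemma heightZ_le (P : {poly int}) (B : nat) :
  (forall i, absz (P`_i)%R <= B)%N -> (heightZ P <= B)%N.
Proof. by move=> leB; apply/bigmax_leqP => i _; apply: leB. Qed.

Lemma heightZ_gt0 (P : {poly int}) : P != 0 -> (0 < heightZ P)%N.
Proof.
move=> P0; apply: leq_trans (coef_le_heightZ P (size P).-1).
by rewrite absz_gt0 -lead_coefE lead_coef_eq0.
Qed.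

Lemma heightZ_zprimitive (P : {poly int}) :
  (heightZ (zprimitive P) <= heightZ P)%N.
Proof.
have [-> | P0] := eqVneq P 0; first by rewrite zprimitive0.
apply: heightZ_le => i; apply: leq_trans (coef_le_heightZ _ i).
rewrite [in X in (_ <= X)%N](zpolyEprim P) coefZ abszM leq_pmull //.
by rewrite absz_gt0 zcontents_eq0.
Qed.

Section EvalZ.
Variable R : realType.
Implicit Types (P : {poly int}) (x : R).

Lemma evalZM P S x : evalZ (P * S) x = evalZ P x * evalZ S x.
Proof. by rewrite /evalZ rmorphM /= hornerM. Qed.

Lemma evalZ_zprimitive P x :
  evalZ P x = (zcontents P)%:~R * evalZ (zprimitive P) x.
Proof. by rewrite {1}(zpolyEprim P) /evalZ map_polyZ /= hornerZ. Qed.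

Lemma evalZ_zprimitive_eq0 P x :
  P != 0 -> (evalZ (zprimitive P) x == 0) = (evalZ P x == 0).
Proof.
by move=> P0; rewrite [in RHS]evalZ_zprimitive mulf_eq0 intr_eq0 zcontents_eq0 (negbTE P0).
Qed.

Lemma norm_evalZ_zprimitive P x :
  P != 0 -> `|evalZ (zprimitive P) x| <= `|evalZ P x|.
Proof.
move=> P0; rewrite [in X in _ <= X]evalZ_zprimitive normrM ler_peMl //.
by rewrite -intr_norm ler1z -abszE lez_nat absz_gt0 zcontents_eq0.
Qed.

End EvalZ.

Lemma sqr_neq_double_sqr (a b : nat) : (0 < b)%N -> (a ^ 2 != 2 * b ^ 2)%N.
Proof.
move=> b0; apply/eqP => e.
have a0 : (0 < a)%N by case: a e => //; nia.
have := congr1 (logn 2) e; rewrite lognM ?expn_gt0 ?b0 // !lognX.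
have -> : logn 2 2 = 1%N by [].
lia.
Qed.

Section Irrational.
Variable R : realType.

Lemma irrational_sqrt2 : irrational (Num.sqrt 2 : R).
Proof.
move=> /rationalP [a [b e]].
have [b0 | b0] := posnP b.
  by move: e; rewrite b0 invr0 mulr0 => /eqP; rewrite sqrtr_eq0; lra.
have e2 : (a ^+ 2)%R = (2 * b ^ 2)%N :> int.
  have aE : a%:~R = Num.sqrt 2 * b%:R :> R by rewrite e divfK // pnatr_eq0 -lt0n.
  apply: (@intr_inj R); rewrite rmorphXn /= aE exprMn sqr_sqrtr ?ler0n //.
  by rewrite -pmulrn natrM natrX.
have := sqr_neq_double_sqr `|a|%N b0.
by rewrite -eqz_nat -e2 -abszX abszE ger0_norm ?sqr_ge0 ?eqxx.
Qed.

Lemma sqrt2_gt1 : 1 < Num.sqrt 2 :> R.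
Proof. by have := sqr_sqrtr (ler0n R 2); have := sqrtr_ge0 (2 : R); nra. Qed.

Lemma irrational_affine (x : R) (m c Q : int) : c != 0 -> Q != 0 ->
  irrational x -> irrational ((m%:~R + c%:~R * x) / Q%:~R).
Proof.
move=> c0 Q0 irr_x [q _ qE]; apply: irr_x.
exists ((q * Q%:~R - m%:~R) / c%:~R) => //.
rewrite fmorph_div rmorphB rmorphM /= !ratr_int qE.
by field; rewrite !intr_eq0 c0 Q0.
Qed.

Lemma size_root_irrational (a : R) (P : {poly int}) :
  irrational a -> P != 0 -> evalZ P a = 0 -> (2 < size P)%N.
Proof.
move=> irr_a P0 Pa; rewrite ltnNge; apply/negP => sP.
move: Pa; rewrite /evalZ (@horner_coef_wide _ 2); last first.
  by rewrite size_map_inj_poly //; apply: intr_inj.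
rewrite !big_ord_recr big_ord0 /= !coef_map /= add0r expr0 mulr1 expr1.
have [p1 | p1] := eqVneq P`_1 0.
  rewrite p1 mul0r addr0 => /eqP; rewrite intr_eq0 => /eqP p0.
  apply: (negP P0); apply/eqP/polyP => -[|[|i]]; rewrite coef0 ?p0 ?p1 //.
  rewrite nth_default //.
  exact: leq_trans sP _.
move=> /eqP; rewrite addr_eq0 => /eqP Pa; apply: irr_a.
exists (- (P`_0)%:~R / (P`_1)%:~R) => //.
by rewrite fmorph_div rmorphN /= !ratr_int Pa opprK mulrC mulKf // intr_eq0.
Qed.

End Irrational.

Section MinpolyZ.
Variable R : realType.
Implicit Types (a : R) (P : {poly int}).

Lemma minpolyZ_irreducibleZ a P : minpolyZ a P -> irreducibleZ P.
Proof.
move=> [P0 [Pa [cP minP]]]; split=> //; split.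
  rewrite poly_unitE; apply/negP => /andP[/size_poly1P [c c0 Pc] _].
  by move: Pa; rewrite Pc /evalZ map_polyC hornerC => /eqP; rewrite intr_eq0 (negbTE c0).
have cofactor_unit (U V : {poly int}) : P = U * V -> evalZ U a = 0 -> V \is a GRing.unit.
  move=> PUV Ua.
  have U0 : U != 0 by apply: contraNneq P0; rewrite PUV => ->; rewrite mul0r.
  have V0 : V != 0 by apply: contraNneq P0; rewrite PUV => ->; rewrite mulr0.
  have /size_poly1P [c c0 Vc] : size V == 1%N.
    have sUV : size P = (size U + size V).-1 by rewrite PUV size_mul.
    by move: (minP U U0 Ua) V0; rewrite sUV -size_poly_gt0; lia.
  rewrite Vc poly_unitE size_polyC c0 coefC /=.
  apply/unitrPr; exists (zcontents U).
  by rewrite -zcontentsZ -mul_polyC mulrC -Vc -PUV.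
move=> U V PUV; have /eqP : evalZ U a * evalZ V a = 0 by rewrite -evalZM -PUV.
rewrite mulf_eq0 => /orP [/eqP Ua | /eqP Va]; first by right; apply: cofactor_unit Ua.
by left; apply: (cofactor_unit V U) => //; rewrite mulrC.
Qed.

Lemma minpolyZ_zprimitive a P : irrational a -> P != 0 -> (size P <= 3)%N ->
  evalZ P a = 0 -> minpolyZ a (zprimitive P).
Proof.
move=> irr_a P0 sP Pa.
have Pa' : evalZ (zprimitive P) a = 0 by apply/eqP; rewrite evalZ_zprimitive_eq0 // Pa.
split; first by rewrite zprimitive_eq0.
split=> //; split; first by rewrite zcontents_primitive P0.
move=> S S0 Sa; rewrite size_zprimitive; apply: leq_trans sP _.
exact: size_root_irrational irr_a S0 Sa.
Qed.

End MinpolyZ.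

Definition sqrt2_conj_poly (Q m c : int) : {poly int} :=
  Poly [:: m ^+ 2 - 2 * c ^+ 2; - (2 * m * Q); Q ^+ 2].

Lemma heightZ_sqrt2_conj_poly (Q m c : int) : Q != 0 -> `|m| <= `|Q| -> `|c| <= 2 ->
  (heightZ (sqrt2_conj_poly Q m c) <= 9 * absz Q ^ 2)%N.
Proof.
move=> Q0 mQ c2; have Q1 : 1 <= `|Q| by rewrite -abszE lez_nat absz_gt0.
by apply: heightZ_le => -[|[|[|i]]]; rewrite coef_Poly /= ?nth_nil //; nia.
Qed.

Section Sqrt2Quadratic.
Variable R : realType.
Variables Q m c : int.
Hypotheses (Q0 : Q != 0) (c0 : c != 0).

Definition quad_sqrt2 : R := (m%:~R + c%:~R * Num.sqrt 2) / Q%:~R.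

Definition sqrt2_minpoly := zprimitive (sqrt2_conj_poly Q m c).

Lemma evalZ_sqrt2_conj_poly (x : R) :
  evalZ (sqrt2_conj_poly Q m c) x =
  Q%:~R * (x - quad_sqrt2) * (Q%:~R * (x - quad_sqrt2) + 2 * c%:~R * Num.sqrt 2).
Proof.
have QxE : Q%:~R * (x - quad_sqrt2) = Q%:~R * x - m%:~R - c%:~R * Num.sqrt 2.
  by rewrite /quad_sqrt2; field; rewrite intr_eq0.
rewrite QxE /evalZ map_Poly horner_Poly /= !(rmorphB, rmorphM, rmorphXn, rmorphN) /=.
transitivity ((Q%:~R * x - m%:~R) ^+ 2 - c%:~R ^+ 2 * Num.sqrt 2 ^+ 2); last by ring.
by rewrite sqr_sqrtr ?ler0n //; ring.
Qed.

Lemma sqrt2_conj_poly_neq0 : sqrt2_conj_poly Q m c != 0.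
Proof.
apply/eqP => /(congr1 (fun p : {poly int} => p`_2)).
by rewrite coef_Poly coef0 /= => /eqP; rewrite expf_eq0 (negbTE Q0).
Qed.

Lemma irrational_quad_sqrt2 : irrational quad_sqrt2.
Proof. exact/irrational_affine/irrational_sqrt2. Qed.

Lemma minpolyZ_sqrt2_minpoly : minpolyZ quad_sqrt2 sqrt2_minpoly.
Proof.
apply: minpolyZ_zprimitive; rewrite ?size_Poly ?sqrt2_conj_poly_neq0 //.
  exact: irrational_quad_sqrt2.
by rewrite evalZ_sqrt2_conj_poly subrr !mulr0 mul0r.
Qed.

Lemma size_sqrt2_minpoly : size sqrt2_minpoly = 3%N.
Proof.
have [P0 [Pa _]] := minpolyZ_sqrt2_minpoly.
apply/eqP; rewrite eqn_leq size_zprimitive size_Poly /=.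
by rewrite -size_zprimitive (size_root_irrational irrational_quad_sqrt2 P0 Pa).
Qed.

Lemma alg_deg2_height_quad_sqrt2 : alg_deg2_height quad_sqrt2 (heightZ sqrt2_minpoly).
Proof.
exists sqrt2_minpoly; split; first exact: minpolyZ_sqrt2_minpoly.
by rewrite size_sqrt2_minpoly.
Qed.

End Sqrt2Quadratic.

Section ExponentSets.
Variable R : realType.

Lemma ereal_sup_full (A : set R) : (forall w, A w) -> ereal_sup [set w%:E | w in A] = +oo%E.
Proof.
move=> Aw; apply: hasNub_ereal_sup; last by exists 0.
by move=> [M ubM]; have := ubM (M + 1) (Aw _); lra.
Qed.

Lemma invX_le_powR (H w : R) (n : nat) : 1 <= H -> w <= n%:R -> H ^- n <= H `^ (- w).
Proof.
move=> H1 wn; rewrite -powR_invn; last exact: le_trans ler01 H1.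
by apply: ler_powR => //; rewrite lerN2.
Qed.

Lemma exists_nat_ge (x y : R) : exists n : nat, x <= n%:R /\ y <= n%:R.
Proof.
exists (Num.truncn (Num.max x y)).+1.
by have /ltW := truncnS_gt (Num.max x y); rewrite ge_max => /andP.
Qed.

Lemma wset_pinfty (C : {poly int} -> Prop) (x : R) :
  (forall n : nat, exists (P : {poly int}) (H : R), [/\ n%:R <= H, 1 <= H, C P,
     (heightZ P)%:R <= H & 0 < `|evalZ P x| <= H ^- n]) ->
  ereal_sup [set w%:E | w in wset C x] = +oo%E.
Proof.
move=> approx; apply: ereal_sup_full => w H0.
have [n [H0n wn]] := exists_nat_ge H0 w.
have [P [H [nH H1 CP hP /andP[Px0 Px]]]] := approx n.
exists H; split; first exact: le_trans nH.
by exists P; do 3!split=> //; apply: le_trans Px (invX_le_powR H1 wn).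
Qed.

Lemma w_eq2_star_pinfty (x : R) :
  (forall n : nat, exists (a H : R) (h : nat), [/\ n%:R <= H, alg_deg2_height a h,
     (0 < h)%N, h%:R <= H & 0 < `|x - a| <= H ^- n.+1]) ->
  w_eq2_star x = +oo%E.
Proof.
move=> approx; apply: ereal_sup_full => w H0.
have [n [H0n wn]] := exists_nat_ge H0 w.
have [a [H [h [nH ah h0 hH /andP[xa0 xa]]]]] := approx n.
have h1 : 1 <= h%:R :> R by rewrite ler1n.
have H1 : 1 <= H := le_trans h1 hH.
exists H; split; first exact: le_trans nH.
exists a, h; do 3!split=> //; apply: le_trans xa _.
rewrite exprS invfM ler_pM ?invr_ge0 ?exprn_ge0 ?(le_trans ler01) //.
  by rewrite lef_pV2 ?posrE ?(lt_le_trans ltr01).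
exact: invX_le_powR.
Qed.

End ExponentSets.

Lemma not_countable_bool_seq : ~ countable [set: nat -> bool].
Proof.
move=> /countable_injP [F Finj].
have pick_preimage k : {s : nat -> bool | (exists t, F t = k) -> F s = k}.
  have [/cid [t Ft] | noF] := pselect (exists t, F t = k); first by exists t.
  by exists (fun=> false).
pose g k := proj1_sig (pick_preimage k).
pose diag k := ~~ g k k.
have g_diag : g (F diag) = diag.
  by apply: Finj; rewrite ?in_setT //; apply: (proj2_sig (pick_preimage _)); exists diag.
have : diag (F diag) = ~~ diag (F diag) by rewrite {1}/diag g_diag.
by case: (diag _).
Qed.

Lemma sup_range_sandwich (R : realType) (u v : nat -> R) :
  (forall n, u n <= u n.+1) -> (forall n, v n.+1 <= v n) -> (forall n, u n <= v n) ->
  forall n, u n <= sup (range u) <= v n.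
Proof.
move=> /nondecreasing_seqP u_incr /nonincreasing_seqP v_decr uv n.
have ub_v k : ubound (range u) (v k).
  move=> _ [j _ <-]; apply: le_trans (u_incr _ _ (leq_maxl j k)) _.
  exact: le_trans (uv _) (v_decr _ _ (leq_maxr j k)).
apply/andP; split; last by apply: ge_sup; [exists (u 0%N), 0%N | exact: ub_v].
by apply: ub_le_sup; [exists (v 0%N); exact: ub_v | exists n].
Qed.

Lemma floor_succ_div_bounds (R : realType) (x d : R) : 0 < d ->
  x < (Num.floor (x * d) + 1)%:~R / d <= x + d^-1.
Proof.
move=> d0; rewrite ltr_pdivlMr // ler_pdivrMr // mulrDl mulVf ?gt_eqF //.
by rewrite floorD1_gt intrD lerD2r Num.Theory.floor_le.
Qed.

(* In the notation of the header, [den n], [qden n] and [qheight n] are D_n, Q_n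
   and H_n; [num n], [qnum n (num n)], [qapprox n] and [sqrt2_coef n] below are
   A_n, m_n, alpha_n and c_n. *)
Fixpoint den (n : nat) : nat :=
  if n is k.+1 then let Q := (8 * den k ^ k.+1)%N in (9 * (9 * Q ^ 2) ^ k.+1 * Q)%N
  else 1%N.

Definition qden (n : nat) : nat := (8 * den n ^ n.+1)%N.

Definition qheight (n : nat) : nat := (9 * qden n ^ 2)%N.

Lemma denS n : den n.+1 = (9 * qheight n ^ n.+1 * qden n)%N.
Proof. by []. Qed.

Lemma den_gt0 n : (0 < den n)%N.
Proof.
elim: n => // n IH; rewrite denS /qheight /qden.
by rewrite !muln_gt0 !expn_gt0 ?muln_gt0 ?expn_gt0 IH.
Qed.

Lemma qden_gt0 n : (0 < qden n)%N.
Proof. by rewrite muln_gt0 expn_gt0 den_gt0. Qed.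

Lemma den_le_qden n : (den n <= qden n)%N.
Proof.
rewrite /qden expnS; have := den_gt0 n; have := expn_gt0 (den n) n.
by rewrite den_gt0; nia.
Qed.

Lemma qden_le_denS n : (81 * qden n <= den n.+1)%N.
Proof.
have Q1 := qden_gt0 n; have H9 : (9 <= qheight n)%N by rewrite /qheight; nia.
have : (qheight n ^ 1 <= qheight n ^ n.+1)%N by rewrite leq_pexp2l //; lia.
by rewrite denS expn1; nia.
Qed.

Lemma ltn_den n : (n < den n)%N.
Proof.
elim: n => // n IH; apply: leq_trans (qden_le_denS n).
by have := den_le_qden n; lia.
Qed.

Lemma qheight_ge9 n : (9 <= qheight n)%N.
Proof. by have := qden_gt0 n; rewrite /qheight; nia. Qed.

Lemma ltn_qheight n : (n < qheight n)%N.
Proof.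
have := den_le_qden n; have := ltn_den n; have := qden_gt0 n.
by rewrite /qheight; nia.
Qed.

Section Construction.
Variables (R : realType) (sg : nat -> bool).

Definition sqrt2_coef (n : nat) : int := if sg n then 2 else 1.

Definition qnum (n : nat) (a : int) : int := a * (8 * den n ^ n)%N.

Fixpoint num (n : nat) : int :=
  if n is k.+1 then
    Num.floor (quad_sqrt2 R (qden k) (qnum k (num k)) (sqrt2_coef k) * (den k.+1)%:R) + 1
  else 0.

Definition rapprox (n : nat) : R := (num n)%:~R / (den n)%:R.

Definition qapprox (n : nat) : R := quad_sqrt2 R (qden n) (qnum n (num n)) (sqrt2_coef n).

Definition xi : R := sup (range rapprox).

Lemma sqrt2_coef_bounds n : 0 < (sqrt2_coef n)%:~R * (Num.sqrt 2 : R) <= 3.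
Proof.
have s2 := sqr_sqrtr (ler0n R 2); have s1 := sqrt2_gt1 R.
by rewrite /sqrt2_coef; case: (sg n) => /=; apply/andP; split; nra.
Qed.

Lemma qapprox_rapprox n :
  qapprox n = rapprox n + (sqrt2_coef n)%:~R * Num.sqrt 2 / (qden n)%:R.
Proof.
have d0 : (den n)%:R != 0 :> R by rewrite pnatr_eq0 -lt0n den_gt0.
rewrite /qapprox /quad_sqrt2 /rapprox /qnum /qden expnS intrM -!pmulrn !natrM !natrX.
by field; rewrite d0 expf_neq0.
Qed.

Lemma rapproxS_bounds n : qapprox n < rapprox n.+1 <= qapprox n + (den n.+1)%:R^-1.
Proof. by apply: floor_succ_div_bounds; rewrite ltr0n den_gt0. Qed.

Lemma rapprox_lt n : rapprox n < rapprox n.+1.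
Proof.
have /andP[cs0 _] := sqrt2_coef_bounds n; have /andP[lt_qS _] := rapproxS_bounds n.
apply: le_lt_trans lt_qS; rewrite qapprox_rapprox lerDl ltW //.
by rewrite divr_gt0 // ltr0n qden_gt0.
Qed.

Lemma rapprox_tail n : rapprox n.+1 + 8 / (qden n.+1)%:R <= rapprox n + 8 / (qden n)%:R.
Proof.
have /andP[_ cs3] := sqrt2_coef_bounds n; have /andP[_ le_Sq] := rapproxS_bounds n.
have Q0 : 0 < (qden n)%:R :> R by rewrite ltr0n qden_gt0.
have D0 : 0 < (den n.+1)%:R :> R by rewrite ltr0n den_gt0.
have QD : (den n.+1)%:R^-1 <= (qden n)%:R^-1 / 81%:R :> R.
  rewrite -invfM lef_pV2 ?posrE ?mulr_gt0 ?ltr0n ?den_gt0 ?qden_gt0 //.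
  by have := qden_le_denS n; rewrite -(ler_nat R) natrM mulrC.
have DQ : (qden n.+1)%:R^-1 <= (den n.+1)%:R^-1 :> R.
  by rewrite lef_pV2 ?posrE ?ltr0n ?qden_gt0 ?den_gt0 // ler_nat den_le_qden.
have cQ : (sqrt2_coef n)%:~R * Num.sqrt 2 / (qden n)%:R <= 3 / (qden n)%:R :> R.
  by rewrite ler_wpM2r // invr_ge0 ltW.
have iQ0 : 0 < (qden n)%:R^-1 :> R by rewrite invr_gt0.
rewrite qapprox_rapprox in le_Sq; lra.
Qed.

Lemma xi_bounds n : rapprox n <= xi <= rapprox n + 8 / (qden n)%:R.
Proof.
apply: (sup_range_sandwich (v := fun k => rapprox k + 8 / (qden k)%:R)) => k.
- exact/ltW/rapprox_lt.
- exact: rapprox_tail.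
- by rewrite lerDl divr_ge0 ?ler0n.
Qed.

Lemma rapprox_lt_xi n : rapprox n < xi.
Proof. by have /andP[+ _] := xi_bounds n.+1; apply: lt_le_trans (rapprox_lt n). Qed.

Lemma num_bounds n : 0 <= num n <= den n.
Proof.
have D0 : 0 < (den n)%:R :> R by rewrite ltr0n den_gt0.
have numE : (num n)%:~R = rapprox n * (den n)%:R by rewrite divfK ?gt_eqF.
have S0n : 0 <= rapprox n.
  have -> : 0 = rapprox 0 by rewrite /rapprox mul0r.
  by apply: (nondecreasing_seqP rapprox).1 => // k; apply/ltW/rapprox_lt.
have Sn1 : rapprox n <= 1.
  have /andP[_ xi1] := xi_bounds 0; have /andP[Sxi _] := xi_bounds n.
  apply: le_trans Sxi _; apply: le_trans xi1 _.
  by rewrite /rapprox mul0r add0r divff // pnatr_eq0 -lt0n qden_gt0.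
apply/andP; split; first by rewrite -(ler0z R) numE mulr_ge0 // ltW.
by rewrite -(ler_int R) numE -pmulrn ler_piMl // ltW.
Qed.

Lemma xi_qapprox n :
  0 < xi - qapprox n <= ((qheight n)%:R ^+ n.+1 * (qden n)%:R)^-1.
Proof.
have /andP[lt_qS le_Sq] := rapproxS_bounds n.
have /andP[SSxi xiS] := xi_bounds n.+1.
have DQ : 8 / (qden n.+1)%:R <= 8 / (den n.+1)%:R :> R.
  by rewrite ler_pM2l // lef_pV2 ?posrE ?ltr0n ?qden_gt0 ?den_gt0 // ler_nat den_le_qden.
have -> : ((qheight n)%:R ^+ n.+1 * (qden n)%:R)^-1 = 9 / (den n.+1)%:R :> R.
  have H0 : (0 < qheight n)%N by apply: leq_trans (qheight_ge9 n).
  rewrite denS; move: (qheight n) (qden n) H0 (qden_gt0 n) => H Q H0 Q0.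
  rewrite !natrM natrX.
  by field; rewrite expf_neq0 ?pnatr_eq0 -?lt0n ?H0 ?Q0.
apply/andP; split; first by rewrite subr_gt0 (lt_le_trans lt_qS).
lra.
Qed.

Definition qpoly (n : nat) : {poly int} :=
  sqrt2_minpoly (qden n) (qnum n (num n)) (sqrt2_coef n).

Lemma qden_neq0 n : (qden n)%:Z != 0.
Proof. by rewrite eqz_nat -lt0n qden_gt0. Qed.

Lemma sqrt2_coef_neq0 n : sqrt2_coef n != 0.
Proof. by rewrite /sqrt2_coef; case: (sg n). Qed.

Lemma heightZ_qpoly n : (heightZ (qpoly n) <= qheight n)%N.
Proof.
apply: leq_trans (heightZ_zprimitive _) _.
apply: heightZ_sqrt2_conj_poly; first exact: qden_neq0.
  have /andP[a0 aD] := num_bounds n.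
  by rewrite /qnum /qden expnS mulnCA normrM !ger0_norm //; nia.
by rewrite /sqrt2_coef; case: (sg n).
Qed.

Lemma evalZ_qpoly_xi n : 0 < `|evalZ (qpoly n) xi| <= (qheight n)%:R ^- n.
Proof.
set h : R := (qheight n)%:R; set Q : R := (qden n)%:R.
have h9 : 9 <= h by have := qheight_ge9 n; rewrite -(ler_nat R).
have Q1 : 1 <= Q by rewrite ler1n qden_gt0.
have /andP[d0 d1] := xi_qapprox n; have /andP[cs0 cs3] := sqrt2_coef_bounds n.
have E0 := sqrt2_conj_poly_neq0 (qnum n (num n)) (sqrt2_coef n) (qden_neq0 n).
have := evalZ_sqrt2_conj_poly (qnum n (num n)) (sqrt2_coef n) (qden_neq0 n) xi.
rewrite -/(qapprox n) -pmulrn -/Q => Exi.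
have ht0 : 0 < h ^- n.+1 by rewrite invr_gt0 exprn_gt0 //; lra.
have u0 : 0 < Q * (xi - qapprox n) by rewrite mulr_gt0 //; lra.
have u1 : Q * (xi - qapprox n) <= h ^- n.+1.
  by rewrite -ler_pdivlMl ?(lt_le_trans ltr01) // -invfM mulrC.
have ht1 : h ^- n.+1 <= 1 by rewrite invf_le1 ?exprn_ege1 ?exprn_gt0 //; lra.
have ht7 : 7 * h ^- n.+1 <= h ^- n.
  rewrite exprS invfM mulrA ler_piMl ?invr_ge0 ?exprn_ge0 // ler_pdivrMr; lra.
have Epos : 0 < evalZ (sqrt2_conj_poly (qden n) (qnum n (num n)) (sqrt2_coef n)) xi.
  by rewrite Exi mulr_gt0 // addr_gt0 // -mulrA mulr_gt0.
apply/andP; split.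
  by rewrite normr_gt0 evalZ_zprimitive_eq0 // gt_eqF.
apply: le_trans (norm_evalZ_zprimitive _ E0) _; rewrite gtr0_norm // Exi.
apply: le_trans ht7; rewrite -mulrA; nra.
Qed.

Lemma liouville_xi : liouville xi.
Proof.
set P := fun n => Poly [:: - num n; (den n)%:Z].
apply: wset_pinfty => n; exists (P n), (den n)%:R.
have D0 : 0 < (den n)%:R :> R by rewrite ltr0n den_gt0.
have /andP[a0 aD] := num_bounds n.
have evalE : evalZ (P n) xi = (den n)%:R * (xi - rapprox n).
  by rewrite /evalZ map_Poly horner_Poly /= /rapprox; field; rewrite gt_eqF.
have /andP[Sxi xiS] := xi_bounds n.
have DQ : (den n)%:R * (8 / (qden n)%:R) = (den n)%:R ^- n :> R.
  by rewrite /qden natrM natrX exprS; field; rewrite expf_neq0 // gt_eqF.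
split.
- by rewrite ler_nat ltnW // ltn_den.
- by rewrite ler1n den_gt0.
- exact: size_Poly.
- rewrite ler_nat; apply: heightZ_le => -[|[|i]]; rewrite coef_Poly /= ?nth_nil //.
  by rewrite abszN -lez_nat gez0_abs.
rewrite evalE normrM gtr0_norm // ger0_norm ?subr_ge0 //.
rewrite pmulr_rgt0 // subr_gt0 rapprox_lt_xi /= -DQ ler_pM2l //; lra.
Qed.

Lemma w_eq2_xi : w_eq2 xi = +oo%E.
Proof.
apply: wset_pinfty => n; exists (qpoly n), (qheight n)%:R.
have mP := minpolyZ_sqrt2_minpoly R (qnum n (num n)) (qden_neq0 n) (sqrt2_coef_neq0 n).
split.
- by rewrite ler_nat ltnW // ltn_qheight.
- by rewrite ler1n (leq_trans _ (qheight_ge9 n)).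
- split; first exact: minpolyZ_irreducibleZ mP.
  exact (size_sqrt2_minpoly R (qnum n (num n)) (qden_neq0 n) (sqrt2_coef_neq0 n)).
- by rewrite ler_nat heightZ_qpoly.
- exact: evalZ_qpoly_xi.
Qed.

Lemma w_eq2_star_xi : w_eq2_star xi = +oo%E.
Proof.
apply: w_eq2_star_pinfty => n.
exists (qapprox n), (qheight n)%:R, (heightZ (qpoly n)).
have [P0 _] := minpolyZ_sqrt2_minpoly R (qnum n (num n)) (qden_neq0 n) (sqrt2_coef_neq0 n).
have /andP[d0 d1] := xi_qapprox n.
split.
- by rewrite ler_nat ltnW // ltn_qheight.
- exact (alg_deg2_height_quad_sqrt2 R (qnum n (num n)) (qden_neq0 n) (sqrt2_coef_neq0 n)).
- exact: heightZ_gt0.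
- by rewrite ler_nat heightZ_qpoly.
rewrite gtr0_norm // d0 /=; apply: le_trans d1 _.
have H0 : (0 < qheight n)%N by apply: leq_trans (qheight_ge9 n).
rewrite lef_pV2 ?posrE ?mulr_gt0 ?exprn_gt0 ?ltr0n ?qden_gt0 //.
by rewrite ler_peMr ?exprn_ge0 // ler1n qden_gt0.
Qed.

End Construction.

Lemma num_eq_prefix (R : realType) (sg1 sg2 : nat -> bool) n :
  (forall k, (k < n)%N -> sg1 k = sg2 k) -> num R sg1 n = num R sg2 n.
Proof.
elim: n => // n IH eq_sg /=.
rewrite IH => [|k lt_kn]; last exact/eq_sg/ltnW.
by rewrite /sqrt2_coef eq_sg.
Qed.

Lemma xi_inj (R : realType) : injective (xi R).
Proof.
move=> sg1 sg2 eq_xi; apply/funext => k; apply/eqP/negPn/negP => neq_k.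
have [n neq_n min_n] := ex_minnP (ex_intro (fun n => sg1 n != sg2 n) k neq_k).
have eq_num : num R sg1 n = num R sg2 n.
  apply: num_eq_prefix => j lt_jn; apply/eqP; apply: contraTT lt_jn => /min_n.
  by rewrite leqNgt.
set Q := (qden n)%:R : R.
have Q0 : 0 < Q by rewrite ltr0n qden_gt0.
have dq : qapprox R sg1 n - qapprox R sg2 n =
    ((sqrt2_coef sg1 n)%:~R - (sqrt2_coef sg2 n)%:~R) * (Num.sqrt 2 / Q).
  by rewrite !qapprox_rapprox /rapprox eq_num; ring.
have invQ_le : Q^-1 <= Num.sqrt 2 / Q.
  by rewrite ler_peMl ?invr_ge0 ?ltW // sqrt2_gt1.
have eps_le : ((qheight n)%:R ^+ n.+1 * Q)^-1 <= (9 * Q)^-1.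
  have h9 : 9 <= (qheight n)%:R :> R by have := qheight_ge9 n; rewrite -(ler_nat R).
  have hn9 : 9 <= (qheight n)%:R ^+ n.+1 :> R.
    by rewrite exprS (le_trans h9) // ler_peMr ?exprn_ege1; lra.
  by rewrite lef_pV2 ?posrE ?mulr_gt0 ?exprn_gt0 // ?ler_pM2r //; lra.
have := xi_qapprox R sg1 n; have := xi_qapprox R sg2 n; rewrite eq_xi invfM.
move: dq neq_n eps_le; rewrite invfM /sqrt2_coef.
by case: (sg1 n); case: (sg2 n) => //= dq _ eps_le /andP[? ?] /andP[? ?]; lra.
Qed.

Local Open Scope classical_set_scope.
Local Open Scope ereal_scope.

Theorem corollary1p4 (R : realType) :
  ~ countable [set xi : R | liouville xi /\ w_eq2 xi = +oo /\ w_eq2_star xi = +oo].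
Proof.
move=> /countable_injP [f f_inj]; apply: not_countable_bool_seq.
apply/countable_injP; exists (f \o xi R) => sg1 sg2 _ _ /= eq_f.
apply: xi_inj; apply: f_inj eq_f; rewrite inE; split;
  by [apply: liouville_xi | split; [apply: w_eq2_xi | apply: w_eq2_star_xi]].
Qed.
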